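(* Let $n \geq 5$ and fix $\tau \in [0, \cos(2\pi/5))$ with $\tau \notin \{\cos(2\pi(i-1)/n) : i = 1,\dots,n\}$. Let $X \in (\mathbb{S}^1)^n$ be the regular $n$-gon, $x_i = (\cos\theta_i, \sin\theta_i)$ with $\theta_i = 2\pi(i-1)/n$. There exists $\varepsilon_{n,\tau} > 0$ such that for all $\varepsilon \in (0, \varepsilon_{n,\tau}]$, $X$ is a critical point of $f(X) = \frac12 \sum_{i,j=1}^n \varphi_{\varepsilon,\tau}(x_i^\top x_j)$ (all weights equal to 1), and the Riemannian Hessian of $f$ at $X$ has one zero eigenvalue and its other $n-1$ eigenvalues are negative.
   Context: $(\mathbb{S}^1)^n$ is the set of $X\in\mathbb{R}^{2\times n}$ with unit-norm columns, a Riemannian submanifold with the Frobenius metric. $\varphi_{\varepsilon,\tau}(t) = \varepsilon\log(1 + e^{(t-\tau)/\varepsilon})$ for $\varepsilon>0$. *)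

From HB Require Import structures.
From mathcomp Require Import all_boot all_order all_algebra.
From mathcomp Require Import all_classical all_reals all_analysis.
Set Implicit Arguments. Unset Strict Implicit. Unset Printing Implicit Defensive.
Import Order.TTheory GRing.Theory Num.Theory.
Import numFieldNormedType.Exports.
Local Open Scope ring_scope.

Section Defs.
Variable R : realType.
Variable n : nat.
Notation M := 'M[R]_(2, n).

Definition frob (A B : M) : R := \sum_(r < 2) \sum_(i < n) A r i * B r i.

Definition coldot (A B : M) (i j : 'I_n) : R := \sum_(r < 2) A r i * B r j.

Definition on_torus (X : M) : Prop := forall i, coldot X X i i = 1.

Definition tangent (X V : M) : Prop := forall i, coldot X V i i = 0.

(* orthogonal projection onto the tangent space (columnwise),
   defined for all X (smooth extension off the manifold) *)
Definition proj (X V : M) : M :=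
  \matrix_(r < 2, i < n) (V r i - coldot X V i i * X r i).

Definition egrad (f : M -> R) (X : M) : M :=
  \matrix_(r < 2, i < n) ('D_(delta_mx r i) f X).

Definition rgrad (f : M -> R) (X : M) : M := proj X (egrad f X).

(* Riemannian Hessian for a Riemannian submanifold:
   Hess f(X)[V] = Proj_X (D grad f (X)[V]), grad f extended smoothly by
   Y |-> proj Y (egrad f Y). *)
Definition rhess (f : M -> R) (X V : M) : M :=
  proj X ('D_V (fun Y => rgrad f Y) X).

End Defs.

Definition phi (R : realType) (eps tau t : R) : R :=
  eps * ln (1 + expR ((t - tau) / eps)).

Definition fobj (R : realType) (n : nat) (eps tau : R) (X : 'M[R]_(2, n)) : R :=
  2^-1 * \sum_(i < n) \sum_(j < n) phi eps tau (coldot X X i j).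

(* regular n-gon: x_i = (cos theta_i, sin theta_i), theta_i = 2 pi i / n
   (0-indexed, i.e. 2 pi (i-1)/n for i = 1..n) *)
Definition ngon (R : realType) (n : nat) : 'M[R]_(2, n) :=
  \matrix_(r < 2, i < n)
    (if r == 0 :> nat then cos (2 * pi * i%:R / n%:R)
     else sin (2 * pi * i%:R / n%:R)).

From Pilot Require Import Defs.
From HB Require Import structures.
From mathcomp Require Import all_boot all_order all_algebra.
From mathcomp Require Import all_classical all_reals all_analysis.
From mathcomp Require Import ring lra.
Set Implicit Arguments. Unset Strict Implicit. Unset Printing Implicit Defensive.
Import Order.TTheory GRing.Theory Num.Theory.
Import numFieldNormedType.Exports.
Local Open Scope ring_scope.

(* At the regular n-gon every column sees the same angles theta_j - theta_k, so the
   Riemannian gradient at column k is a sum of the odd function dphi (cos x) sin x over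
   the rotation-invariant set {theta_l}, hence 0.  On tangent vectors a_k t_k (t_k the
   unit tangent of column k) the Hessian acts as
     a |-> (sum_j W (theta_j - theta_k) (a_k - a_j))_k,
     W x = phi'' (cos x) sin^2 x - phi' (cos x) cos x,
   a convolution with an even kernel, so the Hartley vectors cas (m theta_j) / sqrt n
   form an orthonormal eigenbasis with eigenvalues
   lambda_m = sum_l W theta_l (1 - cos (m theta_l)); lambda_0 = 0.
   As d = min_l |cos theta_l - tau| > 0, the factors phi' and phi'' at cos theta_l are
   exponentially small in d / eps, except phi' ~ 1 when cos theta_l > tau.  Hence every
   W theta_l is at most O(eps), while W theta_1 ~ - cos theta_1 < 0 since
   tau < cos (2 pi / 5) <= cos theta_1; for m <> 0 this neighbour term,
   - cos theta_1 (1 - cos theta_m) / 2, dominates the O(n eps) remainder. *)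

Section DirectionalDerivative.
Variables (R : realType) (V : normedModType R).

Lemma derive_line (F : V -> R) x v :
  'D_v F x = 'D_1 (fun h : R => F (h *: v + x)) 0.
Proof.
rewrite /derive; set g1 := fun h => h^-1 *: _; set g2 := fun h => h^-1 *: _.
suff -> : g1 = g2 by [].
by apply/funext => h; rewrite /g1 /g2 /= addr0 scale0r add0r [_%:A]mulr1.
Qed.

Lemma is_derive_line (F : V -> R) x v d :
  is_derive (0 : R) 1 (fun h : R => F (h *: v + x)) d -> is_derive x v F d.
Proof.
move=> [dF <-]; split; first exact: (derivable1P F x v).2 dF.
by rewrite derive_line.
Qed.

Lemma is_derive_comp_real (F : V -> R) (g : R -> R) x v d g' :
  is_derive x v F d -> is_derive (F x) 1 g g' ->
  is_derive x v (fun y => g (F y)) (g' * d).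
Proof.
move=> [dF dFE] [dg dgE]; apply: is_derive_line.
have hF : is_derive (0 : R) 1 (fun h : R => F (h *: v + x)) d.
  by split; [exact: (derivable1P F x v).1 dF | rewrite -derive_line].
have hg : is_derive ((fun h : R => F (h *: v + x)) 0) 1 g g'.
  by rewrite /= scale0r add0r; split.
exact: is_derive1_comp hg hF.
Qed.

Lemma is_derive_sum_apply m (F : 'I_m -> V -> R) x v (d : 'I_m -> R) :
  (forall i, is_derive x v (F i) (d i)) ->
  is_derive x v (fun y => \sum_(i < m) F i y) (\sum_(i < m) d i).
Proof. by move/is_derive_sum; rewrite fct_sumE. Qed.

Lemma is_deriveM_apply (F G : V -> R) x v a b :
  is_derive x v F a -> is_derive x v G b ->
  is_derive x v (fun y => F y * G y) (F x * b + G x * a).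
Proof. by move=> hF hG; have := is_deriveM hF hG. Qed.

Lemma is_deriveB_apply (F G : V -> R) x v a b :
  is_derive x v F a -> is_derive x v G b ->
  is_derive x v (fun y => F y - G y) (a - b).
Proof. by move=> hF hG; have := is_deriveB hF hG. Qed.

End DirectionalDerivative.

Lemma is_derive_mx_entry (R : realType) m k (Y V : 'M[R]_(m, k)) i j :
  is_derive Y V (fun Z : 'M[R]_(m, k) => Z i j) (V i j).
Proof.
apply: is_derive_line.
rewrite (_ : (fun h : R => _) = (fun h => h * V i j + Y i j)); last first.
  by apply/funext => h; rewrite !mxE.
have := is_deriveD (is_deriveM (is_derive_id (0 : R) 1) (is_derive_cst (V i j) (0 : R) 1))
  (is_derive_cst (Y i j) (0 : R) 1).
by rewrite /= scaler0 add0r [_ *: 1]mulr1 addr0.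
Qed.

Section Softplus.
Variables (R : realType) (eps tau : R).
Hypothesis eps_gt0 : 0 < eps.

Definition phi_arg (t : R) := (t - tau) / eps.
Definition dphi (t : R) := expR (phi_arg t) / (1 + expR (phi_arg t)).
Definition d2phi (t : R) := expR (phi_arg t) / (1 + expR (phi_arg t)) ^+ 2 / eps.

Lemma addr1expR_gt0 (u : R) : 0 < 1 + expR u.
Proof. by rewrite addr_gt0 // expR_gt0. Qed.

Lemma is_derive_expR_phi_arg (t : R) :
  is_derive t 1 (fun y => expR (phi_arg y)) (expR (phi_arg t) * eps^-1).
Proof.
apply: is_derive_comp_real (is_derive_expR _).
have := is_deriveM (is_deriveB (is_derive_id t 1) (is_derive_cst tau t 1))
  (is_derive_cst eps^-1 t 1).
by rewrite /= scaler0 add0r subr0 [_ *: 1]mulr1.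
Qed.

Lemma is_derive_phi (t : R) : is_derive t 1 (phi eps tau) (dphi t).
Proof.
have e_gt0 := addr1expR_gt0 (phi_arg t).
have := is_deriveM (is_derive_cst eps t 1) (is_derive_comp_real
  (is_deriveD (is_derive_cst (1 : R) t 1) (is_derive_expR_phi_arg t)) (is_derive1_ln e_gt0)).
rewrite /= scaler0 addr0 add0r => h.
suff -> : dphi t = eps * ((1 + expR (phi_arg t))^-1 * (expR (phi_arg t) / eps)) by exact: h.
rewrite /dphi; field.
by rewrite !gt_eqF.
Qed.

Lemma is_derive_dphi (t : R) : is_derive t 1 dphi (d2phi t).
Proof.
have e_neq0 : 1 + expR (phi_arg t) != 0 by rewrite gt_eqF ?addr1expR_gt0.
have := is_deriveM (is_derive_expR_phi_arg t)
  (@is_deriveV R (fun y => 1 + expR (phi_arg y)) t _ 1 e_neq0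
    (is_deriveD (is_derive_cst (1 : R) t 1) (is_derive_expR_phi_arg t))).
rewrite /= add0r => h.
suff -> : d2phi t = expR (phi_arg t) *: (- (1 + expR (phi_arg t)) ^- 2 *:
    (expR (phi_arg t) / eps)) + (1 + expR (phi_arg t))^-1 *: (expR (phi_arg t) / eps).
  exact: h.
rewrite /d2phi /GRing.scale /=; field.
by rewrite e_neq0 gt_eqF.
Qed.

End Softplus.

Lemma periodic_natmulD (R : realType) (V : zmodType) (g : R -> V) (T c : R) m :
  periodic g T -> periodic (fun x => g (m%:R * x + c)) T.
Proof.
move=> gT x /=; rewrite -(periodicn gT m (m%:R * x + c)); congr g.
by rewrite mulrDr mulr_natl; ring.
Qed.

Lemma cos_lt1 (R : realType) (x : R) : 0 < x < pi *+ 2 -> cos x < 1.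
Proof.
move=> /andP[x_gt0 x_lt2pi].
have -> : x = (x / 2) *+ 2 by rewrite -mulr_natr; field.
have : 0 < sin (x / 2).
  apply: sin_gt0_pi; apply/andP; split; first by rewrite divr_gt0.
  by rewrite ltr_pdivrMr // mulr_natr.
by rewrite cos_mulr2n cos2sin2 => s_gt0; have := exprn_gt0 2 s_gt0; lra.
Qed.

Lemma sumr_ord_rot (V : zmodType) m (F : nat -> V) : F m = F 0%N ->
  \sum_(j < m) F j.+1 = \sum_(j < m) F j.
Proof.
move=> FmF0; apply: (addrI (F 0%N)).
have := big_ord_recl m (fun j : 'I_m.+1 => F j); rewrite /= => <-.
by rewrite big_ord_recr /= FmF0 addrC.
Qed.

Section RegularAngles.
Variables (R : realType) (n : nat).
Hypothesis n_gt0 : (0 < n)%N.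

Definition theta (k : nat) : R := 2 * pi * k%:R / n%:R.

Lemma natrn_neq0 : (n%:R : R) != 0. Proof. by rewrite pnatr_eq0 -lt0n. Qed.

Lemma thetaD a b : theta (a + b) = theta a + theta b.
Proof. by rewrite /theta natrD; field; exact: natrn_neq0. Qed.

Lemma thetaB a b : (b <= a)%N -> theta (a - b) = theta a - theta b.
Proof. by move=> ba; rewrite /theta natrB //; field; exact: natrn_neq0. Qed.

Lemma theta_n : theta n = pi *+ 2.
Proof. by rewrite /theta -mulr_natl; field; exact: natrn_neq0. Qed.

Lemma natmul_theta a k : a%:R * theta k = theta (a * k).
Proof. by rewrite /theta natrM; field; exact: natrn_neq0. Qed.

Lemma cos_theta_lt1 k : (0 < k < n)%N -> cos (theta k) < 1.
Proof.
move=> /andP[k_gt0 k_lt_n]; apply: cos_lt1.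
have -> : theta k = pi *+ 2 * (k%:R / n%:R).
  by rewrite /theta -mulr_natl; field; exact: natrn_neq0.
have q_gt0 : (0 : R) < k%:R / n%:R by rewrite divr_gt0 // ltr0n.
have q_lt1 : (k%:R : R) / n%:R < 1 by rewrite ltr_pdivrMr ?ltr0n // mul1r ltr_nat.
have := pi_gt0 R; set q := _ / _ in q_gt0 q_lt1 *.
by rewrite -mulr_natl => pi_gt0; apply/andP; split; nra.
Qed.

Section PeriodicSums.
Variable g : R -> R.
Hypothesis g_per : periodic g (pi *+ 2).

Lemma sum_theta_shift k : \sum_(j < n) g (theta (j + k)) = \sum_(j < n) g (theta j).
Proof.
elim: k => [|k IH]; first by under eq_bigr do rewrite addn0.
rewrite -IH -(sumr_ord_rot (F := fun j => g (theta (j + k)))) /=.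
  by apply: eq_bigr => j _; rewrite addSnnS.
by rewrite add0n thetaD theta_n addrC g_per.
Qed.

Lemma sum_theta_subr k : (k <= n)%N ->
  \sum_(j < n) g (theta j - theta k) = \sum_(j < n) g (theta j).
Proof.
move=> k_le_n; rewrite -(sum_theta_shift (n - k)); apply: eq_bigr => j _.
by rewrite thetaD thetaB // theta_n addrCA addrC g_per.
Qed.

Lemma sum_theta_opp : \sum_(j < n) g (- theta j) = \sum_(j < n) g (theta j).
Proof.
rewrite (reindex_inj rev_ord_inj) /= -(sum_theta_shift 1); apply: eq_bigr => j _.
by rewrite thetaB ?ltn_ord // addn1 theta_n opprB -[in RHS](subrK (pi *+ 2) (theta _)) g_per.
Qed.

Lemma sum_theta_odd : (forall x, g (- x) = - g x) -> \sum_(j < n) g (theta j) = 0.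
Proof.
move=> g_odd; have := sum_theta_opp.
by under eq_bigr do rewrite g_odd; rewrite sumrN => h; lra.
Qed.

End PeriodicSums.

Lemma sum_sin_theta a : \sum_(j < n) sin (a%:R * theta j) = 0.
Proof.
have sin_per : periodic (fun x : R => sin (a%:R * x)) (pi *+ 2).
  by move=> x /=; have := periodic_natmulD 0 a (@sinD2pi R) x; rewrite !addr0.
by apply: (sum_theta_odd sin_per) => x; rewrite mulrN sinN.
Qed.

Lemma sum_cos_theta a : (0 < a < n)%N -> \sum_(j < n) cos (a%:R * theta j) = 0.
Proof.
move=> a_range; set C := \sum_(j < n) _.
have cos_per : periodic (fun x : R => cos (a%:R * x)) (pi *+ 2).
  by move=> x /=; have := periodic_natmulD 0 a (@cosD2pi R) x; rewrite !addr0.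
have := sum_theta_shift cos_per 1.
under eq_bigr do rewrite thetaD mulrDr cosD.
rewrite big_split /= sumrN -!mulr_suml sum_sin_theta mul0r oppr0 addr0 -/C => CE.
have : C * (1 - cos (a%:R * theta 1)) = 0 by rewrite mulrBr mulr1 -[X in X - _]CE subrr.
move/eqP; rewrite mulf_eq0 subr_eq0 => /orP[/eqP // | /eqP cos1].
by have := cos_theta_lt1 a_range; rewrite -(muln1 a) -natmul_theta -cos1 ltxx.
Qed.

Definition cas (x : R) := cos x + sin x.

Lemma sum_even_kernel_cas (K : R -> R) m k :
  periodic K (pi *+ 2) -> (forall x, K (- x) = K x) -> (k <= n)%N ->
  \sum_(j < n) K (theta j - theta k) * cas (m%:R * theta j) =
  (\sum_(l < n) K (theta l) * cos (m%:R * theta l)) * cas (m%:R * theta k).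
Proof.
move=> K_per K_even k_le_n; set c := m%:R * theta k.
pose g x := K x * cas (m%:R * x + c).
have g_per : periodic g (pi *+ 2).
  by move=> x; rewrite /g K_per /cas (periodic_natmulD c m (@cosD2pi R))
                                    (periodic_natmulD c m (@sinD2pi R)).
have Ksin_per : periodic (fun x => K x * sin (m%:R * x)) (pi *+ 2).
  move=> x; rewrite K_per; congr (_ * _).
  by have := periodic_natmulD 0 m (@sinD2pi R) x; rewrite !addr0.
have Ksin0 : \sum_(l < n) K (theta l) * sin (m%:R * theta l) = 0.
  by apply: (sum_theta_odd Ksin_per) => x; rewrite K_even mulrN sinN mulrN.
have -> : \sum_(j < n) K (theta j - theta k) * cas (m%:R * theta j) =
    \sum_(j < n) g (theta j - theta k).
  by apply: eq_bigr => j _; rewrite /g /c mulrBr subrK.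
rewrite (sum_theta_subr g_per k_le_n).
transitivity (\sum_(l < n) (K (theta l) * cos (m%:R * theta l) * cas c
                          + K (theta l) * sin (m%:R * theta l) * (cos c - sin c))).
  by apply: eq_bigr => l _; rewrite /g /cas cosD sinD; ring.
by rewrite big_split /= -!mulr_suml Ksin0 mul0r addr0.
Qed.

End RegularAngles.

Lemma sumr_delta (R : pzSemiRingType) m (F : 'I_m -> R) k :
  \sum_(i < m) (i == k)%:R * F i = F k.
Proof. by under eq_bigr do rewrite mulr_natl mulrb; rewrite -big_mkcond big_pred1_eq. Qed.

Section FobjDerivatives.
Variables (R : realType) (n : nat) (eps tau : R).
Hypothesis eps_gt0 : 0 < eps.
Notation M := 'M[R]_(2, n).

Lemma coldotC (Y Z : M) i j : coldot Y Z i j = coldot Z Y j i.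
Proof. by apply: eq_bigr => r _; rewrite mulrC. Qed.

Lemma coldot_deltaL (Y : M) r k i j :
  coldot (delta_mx r k) Y i j = (i == k)%:R * Y r j.
Proof.
rewrite /coldot (bigD1 r) //= big1 ?addr0; first by rewrite mxE eqxx.
by move=> s /negPf sr; rewrite mxE sr mul0r.
Qed.

Definition dgram (Y V : M) i j := coldot V Y i j + coldot Y V i j.

Lemma is_derive_gram (Y V : M) i j :
  is_derive Y V (fun Z : M => coldot Z Z i j) (dgram Y V i j).
Proof.
apply: is_derive_eq.
  exact: is_derive_sum_apply (fun r => is_deriveM_apply
    (is_derive_mx_entry Y V r i) (is_derive_mx_entry Y V r j)).
by rewrite /dgram /coldot -big_split /=; apply: eq_bigr => r _; ring.
Qed.

Lemma is_derive_fobj (Y V : M) : is_derive Y V (fobj eps tau)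
  (2^-1 * \sum_(i < n) \sum_(j < n) dphi eps tau (coldot Y Y i j) * dgram Y V i j).
Proof.
have := is_deriveM_apply (is_derive_cst (2^-1 : R) Y V)
  (is_derive_sum_apply (fun i => is_derive_sum_apply (fun j =>
    is_derive_comp_real (is_derive_gram Y V i j) (is_derive_phi tau eps_gt0 _)))).
by rewrite mulr0 addr0.
Qed.

Definition egrad_fobj (Y : M) r k := \sum_(j < n) dphi eps tau (coldot Y Y k j) * Y r j.

Lemma egrad_fobjE (Y : M) : egrad (fobj eps tau) Y = \matrix_(r, k) egrad_fobj Y r k.
Proof.
apply/matrixP => r k; rewrite !mxE.
have [_ ->] := is_derive_fobj Y (delta_mx r k).
have -> :
    \sum_(i < n) \sum_(j < n) dphi eps tau (coldot Y Y i j) * dgram Y (delta_mx r k) i j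
   = \sum_(i < n) \sum_(j < n) (i == k)%:R * (dphi eps tau (coldot Y Y i j) * Y r j)
   + \sum_(i < n) \sum_(j < n) (j == k)%:R * (dphi eps tau (coldot Y Y i j) * Y r i).
  rewrite -big_split; apply: eq_bigr => i _; rewrite -big_split /=; apply: eq_bigr => j _.
  rewrite /dgram (coldot_deltaL Y r k i j) (coldotC Y (delta_mx r k)).
  by rewrite (coldot_deltaL Y r k j i); ring.
under eq_bigr do rewrite -mulr_sumr.
rewrite sumr_delta; under [X in _ * (_ + X)]eq_bigr do rewrite sumr_delta coldotC.
by rewrite /egrad_fobj; field.
Qed.

Definition egrad_fobj_dir (Y V : M) r k := \sum_(j < n)
  (dphi eps tau (coldot Y Y k j) * V r j
   + Y r j * (d2phi eps tau (coldot Y Y k j) * dgram Y V k j)).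

Lemma is_derive_egrad_fobj (Y V : M) r k :
  is_derive Y V (fun Z => egrad_fobj Z r k) (egrad_fobj_dir Y V r k).
Proof.
exact: is_derive_sum_apply (fun j => is_deriveM_apply
  (is_derive_comp_real (is_derive_gram Y V k j) (is_derive_dphi tau eps_gt0 _))
  (is_derive_mx_entry Y V r j)).
Qed.

Definition egrad_fobj_normal (Y : M) k := \sum_(s < 2) Y s k * egrad_fobj Y s k.

Definition rgrad_fobj_dir (Y V : M) r k := egrad_fobj_dir Y V r k
  - ((\sum_(s < 2) (Y s k * egrad_fobj_dir Y V s k + egrad_fobj Y s k * V s k)) * Y r k
     + egrad_fobj_normal Y k * V r k).

Lemma rgrad_fobjE (Y : M) r k : rgrad (fobj eps tau) Y r k =
  egrad_fobj Y r k - egrad_fobj_normal Y k * Y r k.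
Proof.
rewrite /rgrad egrad_fobjE /proj !mxE; congr (_ - _ * _).
by apply: eq_bigr => s _; rewrite mxE.
Qed.

Lemma is_derive_rgrad_fobj (Y V : M) r k :
  is_derive Y V (fun Z => rgrad (fobj eps tau) Z r k) (rgrad_fobj_dir Y V r k).
Proof.
have -> : (fun Z => rgrad (fobj eps tau) Z r k) =
    (fun Z => egrad_fobj Z r k - egrad_fobj_normal Z k * Z r k).
  by apply/funext => Z; exact: rgrad_fobjE.
apply: is_derive_eq.
  exact: is_deriveB_apply (is_derive_egrad_fobj Y V r k) (is_deriveM_apply
    (is_derive_sum_apply (fun s => is_deriveM_apply (is_derive_mx_entry Y V s k)
      (is_derive_egrad_fobj Y V s k)))
    (is_derive_mx_entry Y V r k)).
by rewrite /= /rgrad_fobj_dir /egrad_fobj_normal; ring.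
Qed.

Lemma rhess_fobjE (X V : M) :
  rhess (fobj eps tau) X V = Defs.proj X (\matrix_(r, k) rgrad_fobj_dir X V r k).
Proof.
have dmx : derivable (rgrad (fobj eps tau)) X V.
  by apply/derivable_mxP => r k; have [] := is_derive_rgrad_fobj X V r k.
rewrite /rhess (derive_mx dmx); congr Defs.proj; apply/matrixP => r k; rewrite !mxE.
by have [_ ->] := is_derive_rgrad_fobj X V r k.
Qed.

End FobjDerivatives.

Lemma sumr_ord2 (R : nmodType) (F : 'I_2 -> R) : \sum_(s < 2) F s = F 0 + F 1.
Proof. by rewrite big_ord_recl big_ord1; congr (F _ + F _); apply/val_inj. Qed.

Section RegularPolygon.
Variables (R : realType) (n : nat).
Notation M := 'M[R]_(2, n).
Notation X := (ngon R n).
Notation th := (theta R n).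

Definition ngon_tangent : M :=
  \matrix_(r, j) (if r == 0 :> nat then - sin (th j) else cos (th j)).
Notation T := ngon_tangent.

Definition tfield (a : 'I_n -> R) : M := \matrix_(r, j) (a j * T r j).

Lemma ngon0 j : X 0 j = cos (th j). Proof. by rewrite mxE. Qed.
Lemma ngon1 j : X 1 j = sin (th j). Proof. by rewrite mxE. Qed.
Lemma ngon_tangent0 j : T 0 j = - sin (th j). Proof. by rewrite mxE. Qed.
Lemma ngon_tangent1 j : T 1 j = cos (th j). Proof. by rewrite mxE. Qed.
Lemma tfieldE a r j : tfield a r j = a j * T r j. Proof. by rewrite mxE. Qed.

Definition ngonE := (ngon0, ngon1, ngon_tangent0, ngon_tangent1, tfieldE).

Lemma proj_ngon (Z : M) :
  Defs.proj X Z = \matrix_(r, k) (coldot T Z k k * T r k).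
Proof.
apply/matrixP => r k; rewrite !mxE /coldot !sumr_ord2 !ngonE.
have r01 : r = 0 \/ r = 1 by case: r => -[|[|//]] ?; [left | right]; apply/val_inj.
have sc := cos2Dsin2 (th k); set c := cos _ in sc *; set s := sin _ in sc *.
by case: r01 => ->; rewrite ?ngonE -/c -/s /= -[X in X - _ = _]mul1r -sc; ring.
Qed.

Lemma coldot_ngon k j : coldot X X k j = cos (th j - th k).
Proof. by rewrite /coldot sumr_ord2 !ngonE cosB; ring. Qed.

Lemma tangent_tfield a : tangent X (tfield a).
Proof. by move=> j; rewrite /coldot sumr_ord2 !ngonE; ring. Qed.

Lemma dgram_ngon_tfield a k j : dgram X (tfield a) k j = (a k - a j) * sin (th j - th k).
Proof. by rewrite /dgram /coldot !sumr_ord2 !ngonE sinB; ring. Qed.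

Variables eps tau : R.
Hypothesis eps_gt0 : 0 < eps.

Definition hess_kernel (x : R) :=
  d2phi eps tau (cos x) * sin x ^+ 2 - dphi eps tau (cos x) * cos x.

Lemma egrad_fobj_normal_ngon k : egrad_fobj_normal eps tau X k =
  \sum_(j < n) dphi eps tau (cos (th j - th k)) * cos (th j - th k).
Proof.
rewrite /egrad_fobj_normal sumr_ord2 /egrad_fobj !mulr_sumr -big_split /=.
by apply: eq_bigr => j _; rewrite coldot_ngon !ngonE cosB; ring.
Qed.

Lemma tangent_egrad_fobj_dir_ngon a k :
  \sum_(s < 2) T s k * egrad_fobj_dir eps tau X (tfield a) s k =
  \sum_(j < n) (dphi eps tau (cos (th j - th k)) * a j * cos (th j - th k)
    + d2phi eps tau (cos (th j - th k)) * ((a k - a j) * sin (th j - th k)) * sin (th j - th k)).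
Proof.
rewrite /egrad_fobj_dir; under eq_bigr do rewrite mulr_sumr.
rewrite exchange_big /=; apply: eq_bigr => j _.
by rewrite sumr_ord2 coldot_ngon dgram_ngon_tfield !ngonE cosB sinB; ring.
Qed.

Lemma rgrad_fobj_ngon : rgrad (fobj eps tau) X =
  tfield (fun k => \sum_(j < n) dphi eps tau (cos (th j - th k)) * sin (th j - th k)).
Proof.
rewrite /rgrad egrad_fobjE // proj_ngon; apply/matrixP => r k; rewrite !mxE.
congr (_ * _); rewrite /coldot sumr_ord2 !mxE /egrad_fobj !mulr_sumr -big_split /=.
by apply: eq_bigr => j _; rewrite coldot_ngon !ngonE sinB; ring.
Qed.

Lemma rhess_fobj_ngon a : rhess (fobj eps tau) X (tfield a) =
  tfield (fun k => \sum_(j < n) hess_kernel (th j - th k) * (a k - a j)).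
Proof.
rewrite rhess_fobjE // proj_ngon; apply/matrixP => r k; rewrite !mxE; congr (_ * _).
rewrite /coldot; under eq_bigr do rewrite [X in _ * X]mxE.
have -> : \sum_(s < 2) T s k * rgrad_fobj_dir eps tau X (tfield a) s k =
    \sum_(s < 2) T s k * egrad_fobj_dir eps tau X (tfield a) s k
    - egrad_fobj_normal eps tau X k * a k.
  rewrite /rgrad_fobj_dir !sumr_ord2 !ngonE.
  by rewrite -[in RHS](mulr1 (a k)) -(cos2Dsin2 (th k)); ring.
rewrite tangent_egrad_fobj_dir_ngon egrad_fobj_normal_ngon mulr_suml -sumrB.
by apply: eq_bigr => j _; rewrite /hess_kernel; ring.
Qed.

End RegularPolygon.

Section HartleyBasis.
Variables (R : realType) (n : nat).
Hypothesis n_gt0 : (0 < n)%N.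
Notation th := (theta R n).
Notation X := (ngon R n).

Lemma rgrad_fobj_ngon0 (eps tau : R) : 0 < eps -> rgrad (fobj eps tau) X = 0.
Proof.
move=> eps_gt0; rewrite rgrad_fobj_ngon //; apply/matrixP => r k; rewrite !mxE.
have g_per : periodic (fun x => dphi eps tau (cos x) * sin x) (pi *+ 2).
  by move=> x /=; rewrite cosD2pi sinD2pi.
rewrite (sum_theta_subr n_gt0 g_per (ltnW (ltn_ord k))) (sum_theta_odd n_gt0 g_per) ?mul0r //.
by move=> x; rewrite cosN sinN mulrN.
Qed.

Lemma sum_cos_theta_diff (m m' : nat) : (m < n)%N -> (m' < n)%N ->
  \sum_(j < n) cos (m%:R * th j - m'%:R * th j) = if m == m' then n%:R else 0.
Proof.
move=> m_lt_n m'_lt_n; case: (ltngtP m m') => mm'.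
- under eq_bigr do rewrite -cosN opprB -mulrBl -natrB ?(ltnW mm') //.
  by apply: (sum_cos_theta _ n_gt0); rewrite subn_gt0 mm' (leq_ltn_trans (leq_subr _ _)).
- under eq_bigr do rewrite -mulrBl -natrB ?(ltnW mm') //.
  by apply: (sum_cos_theta _ n_gt0); rewrite subn_gt0 mm' (leq_ltn_trans (leq_subr _ _)).
- by rewrite mm'; under eq_bigr do rewrite subrr cos0; rewrite sumr_const card_ord.
Qed.

Definition hartley (m : nat) : 'M[R]_(2, n) :=
  tfield (fun j => cas (m%:R * th j) / Num.sqrt n%:R).

Lemma frob_hartley (m m' : 'I_n) : frob (hartley m) (hartley m') = (m == m')%:R.
Proof.
have sqrtn_gt0 : 0 < Num.sqrt (n%:R : R) by rewrite sqrtr_gt0 ltr0n.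
have n_neq0 : (n%:R : R) != 0 by rewrite pnatr_eq0 -lt0n.
rewrite /frob sumr_ord2 -big_split /=.
have -> : \sum_(i < n) (hartley m 0 i * hartley m' 0 i + hartley m 1 i * hartley m' 1 i)
   = \sum_(i < n) (cos (m%:R * th i - m'%:R * th i) + sin ((m + m')%:R * th i)) / n%:R.
  apply: eq_bigr => i _; rewrite /hartley !ngonE.
  set q := Num.sqrt _; rewrite -(sqr_sqrtr (ler0n R n)) -/q.
  transitivity (cas (m%:R * th i) * cas (m'%:R * th i) / q ^+ 2
                * (cos (th i) ^+ 2 + sin (th i) ^+ 2)).
    by field; rewrite gt_eqF.
  by rewrite cos2Dsin2 mulr1 natrD (mulrDl _ _ (th i)) sinD cosB /cas; field; rewrite gt_eqF.
rewrite -mulr_suml big_split /= (sum_sin_theta _ n_gt0) addr0 sum_cos_theta_diff //.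
have [->|mm'] := eqVneq m m'; first by rewrite !eqxx divff.
have mm'_nat : (m : nat) != m' by [].
by rewrite (negbTE mm'_nat) mul0r.
Qed.

Lemma tangent_hartley m : tangent X (hartley m).
Proof. exact: tangent_tfield. Qed.

Variables eps tau : R.
Notation W := (hess_kernel eps tau).

Definition hess_eigenvalue (m : nat) := \sum_(l < n) W (th l) * (1 - cos (m%:R * th l)).

Lemma hess_kernel_periodic : periodic W (pi *+ 2).
Proof. by move=> x; rewrite /hess_kernel cosD2pi sinD2pi. Qed.

Lemma hess_kernelN x : W (- x) = W x.
Proof. by rewrite /hess_kernel cosN sinN sqrrN. Qed.

Lemma hess_kernel_cas m k : (k <= n)%N ->
  \sum_(j < n) W (th j - th k) * (cas (m%:R * th k) - cas (m%:R * th j)) =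
  hess_eigenvalue m * cas (m%:R * th k).
Proof.
move=> k_le_n; have W_per := hess_kernel_periodic.
have -> : \sum_(j < n) W (th j - th k) * (cas (m%:R * th k) - cas (m%:R * th j)) =
    cas (m%:R * th k) * \sum_(j < n) W (th j - th k)
    - \sum_(j < n) W (th j - th k) * cas (m%:R * th j).
  by rewrite mulr_sumr -sumrB; apply: eq_bigr => j _; ring.
rewrite (sum_theta_subr n_gt0 W_per k_le_n).
rewrite (sum_even_kernel_cas n_gt0 m W_per hess_kernelN k_le_n).
have -> : hess_eigenvalue m =
    \sum_(l < n) W (th l) - \sum_(l < n) W (th l) * cos (m%:R * th l).
  by rewrite -sumrB; apply: eq_bigr => l _; ring.
by ring.
Qed.

Lemma rhess_hartley m : 0 < eps ->
  rhess (fobj eps tau) X (hartley m) = hess_eigenvalue m *: hartley m.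
Proof.
move=> eps_gt0; rewrite /hartley rhess_fobj_ngon //; apply/matrixP => r k; rewrite !mxE.
set q := Num.sqrt _.
have -> : \sum_(j < n) W (th j - th k) * (cas (m%:R * th k) / q - cas (m%:R * th j) / q)
    = (\sum_(j < n) W (th j - th k) * (cas (m%:R * th k) - cas (m%:R * th j))) / q.
  by rewrite mulr_suml; apply: eq_bigr => j _; ring.
by rewrite hess_kernel_cas 1?ltnW //; ring.
Qed.

End HartleyBasis.

Lemma expRN_le_inv_sq (R : realType) (K : R) : 0 < K -> expR (- K) <= 4 / K ^+ 2.
Proof.
move=> K_gt0.
have half : 1 + K / 2 <= expR (K / 2) := expR_ge1Dx _.
have sq : expR K = expR (K / 2) * expR (K / 2) by rewrite -expRD; congr expR; field.
have inv : expR (- K) * expR K = 1 by rewrite mulrC expRxMexpNx_1.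
have := expR_gt0 (- K); have := expR_gt0 (K / 2).
rewrite ler_pdivlMr ?exprn_gt0 //.
set a := expR (- K) in inv *; set b := expR K in sq inv *; set c := expR (K / 2) in half sq *.
move=> c_gt0 a_gt0; have K2_le : K ^+ 2 <= 4 * b.
  rewrite sq; have hc : 0 <= 1 + K / 2 by lra.
  by have := ler_pM hc hc half half; nra.
nra.
Qed.

Section SoftplusBounds.
Variables (R : realType) (eps tau : R).
Hypothesis eps_gt0 : 0 < eps.
Notation dphi := (dphi eps tau).
Notation d2phi := (d2phi eps tau).
Notation phi_arg := (phi_arg eps tau).

Lemma dphi_ge0 t : 0 <= dphi t.
Proof. by rewrite /dphi divr_ge0 // ?expR_ge0 // ltW // addr1expR_gt0. Qed.

Lemma d2phi_ge0 t : 0 <= d2phi t.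
Proof. by rewrite /d2phi !divr_ge0 ?expR_ge0 ?exprn_ge0 ?ltW ?addr1expR_gt0. Qed.

Lemma dphi_le_expR t d : t - tau <= - d -> dphi t <= expR (- (d / eps)).
Proof.
move=> t_le; have e_gt0 := expR_gt0 (phi_arg t).
apply: le_trans (_ : expR (phi_arg t) <= _).
  by rewrite /dphi ler_pdivrMr ?addr1expR_gt0 //; nra.
rewrite ler_expR /phi_arg -mulNr ler_wpM2r // invr_ge0 ltW //.
Qed.

Lemma dphi_ge_half t : tau < t -> 2^-1 <= dphi t.
Proof.
move=> tau_lt; have : 1 < expR (phi_arg t).
  by rewrite expR_gt1 /phi_arg divr_gt0 // subr_gt0.
by rewrite /dphi ler_pdivlMr ?addr1expR_gt0 //; lra.
Qed.

Lemma d2phi_le t d : 0 < d -> d <= `|t - tau| -> d2phi t <= expR (- (d / eps)) / eps.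
Proof.
move=> d_gt0 d_le; rewrite /d2phi ler_pM2r ?invr_gt0 //.
set u := phi_arg t; have e_gt0 := expR_gt0 u.
have q_gt0 : 0 < (1 + expR u) ^+ 2 by rewrite exprn_gt0 // addr1expR_gt0.
rewrite ler_pdivrMr //.
have [t_ge|t_lt] := leP 0 (t - tau).
- rewrite ger0_norm // in d_le.
  have du : d / eps <= u by rewrite /u /phi_arg ler_wpM2r // invr_ge0 ltW.
  have hb : expR (- u) <= expR (- (d / eps)) by rewrite ler_expR lerN2.
  have inv : expR (- u) * expR u = 1 by rewrite mulrC expRxMexpNx_1.
  have b_gt0 := expR_gt0 (- u).
  apply: le_trans (_ : expR (- u) * (1 + expR u) ^+ 2 <= _); last by rewrite ler_pM2r.
  set a := expR u in e_gt0 inv q_gt0 *; set b := expR (- u) in hb inv b_gt0 *.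
  nra.
- rewrite ltr0_norm // in d_le.
  have ud : u <= - (d / eps).
    by rewrite /u /phi_arg -mulNr; apply: ler_wpM2r; [rewrite invr_ge0 ltW | lra].
  have hb : expR u <= expR (- (d / eps)) by rewrite ler_expR.
  set a := expR u in e_gt0 q_gt0 hb *.
  have : a <= a * (1 + a) ^+ 2 by nra.
  set c := expR (- (d / eps)) in hb *; nra.
Qed.

Notation W := (hess_kernel eps tau).

Lemma hess_kernel_le x d : 0 < d -> d <= `|cos x - tau| -> 0 <= tau ->
  W x <= expR (- (d / eps)) / eps + expR (- (d / eps)).
Proof.
move=> d_gt0 d_le tau_ge0; rewrite /hess_kernel.
have := d2phi_le d_gt0 d_le; have := d2phi_ge0 (cos x); have := dphi_ge0 (cos x).
have s2_le1 : sin x ^+ 2 <= 1 by have := cos2Dsin2 x; have := sqr_ge0 (cos x); lra.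
have := sqr_ge0 (sin x); have := expR_gt0 (- (d / eps)).
set E := expR _; set a := d2phi _; set b := dphi _ => E_gt0 s2_ge0 b_ge0 a_ge0 a_le.
have aS : a * sin x ^+ 2 <= E / eps by apply: le_trans a_le; rewrite -[leRHS]mulr1 ler_wpM2l.
have [c_ge0|c_lt0] := leP 0 (cos x); first by have := mulr_ge0 b_ge0 c_ge0; lra.
have : cos x - tau <= - d by rewrite ltr0_norm ?subr_lt0 in d_le; lra.
move=> /dphi_le_expR; rewrite -/b -/E => b_le.
have : - (b * cos x) <= b by rewrite -mulrN -[leRHS]mulr1 ler_wpM2l //; have := cos_geN1 x; lra.
lra.
Qed.

Lemma hess_kernel_le_cos x d : 0 < d -> d <= `|cos x - tau| -> 0 <= tau -> tau < cos x ->
  W x <= expR (- (d / eps)) / eps - cos x / 2.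
Proof.
move=> d_gt0 d_le tau_ge0 tau_lt; rewrite /hess_kernel.
have := d2phi_le d_gt0 d_le; have := d2phi_ge0 (cos x); have := dphi_ge_half tau_lt.
have s2_le1 : sin x ^+ 2 <= 1 by have := cos2Dsin2 x; have := sqr_ge0 (cos x); lra.
have := sqr_ge0 (sin x).
set E := expR _; set a := d2phi _; set b := dphi _ => s2_ge0 b_ge a_ge0 a_le.
have aS : a * sin x ^+ 2 <= E / eps by apply: le_trans a_le; rewrite -[leRHS]mulr1 ler_wpM2l.
have : 2^-1 * cos x <= b * cos x by rewrite ler_pM2r //; lra.
lra.
Qed.

End SoftplusBounds.

Section SpectralGap.
Variables (R : realType) (n : nat) (eps tau d : R).
Hypotheses (n_gt1 : (1 < n)%N) (eps_gt0 : 0 < eps) (d_gt0 : 0 < d) (tau_ge0 : 0 <= tau).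
Hypothesis d_le : forall l : 'I_n, d <= `|cos (theta R n l) - tau|.
Hypothesis tau_lt : tau < cos (theta R n 1).
Notation th := (theta R n).
Notation W := (hess_kernel eps tau).
Let A := expR (- (d / eps)).
Let E := A / eps + A.

Lemma hess_eigenvalue_le k :
  hess_eigenvalue n eps tau k <= (2 * E) *+ n - cos (th 1) * (1 - cos (th k)) / 2.
Proof.
have A_gt0 : 0 < A by rewrite expR_gt0.
have E_ge0 : 0 <= E by rewrite addr_ge0 ?divr_ge0 ?ltW.
have D_bounds l : 0 <= 1 - cos (k%:R * th l) <= 2.
  by have := cos_le1 (k%:R * th l); have := cos_geN1 (k%:R * th l); lra.
have term_le (l : 'I_n) : W (th l) * (1 - cos (k%:R * th l)) <= 2 * E.
  have /andP[D_ge0 D_le2] := D_bounds l.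
  have := hess_kernel_le eps_gt0 d_gt0 (d_le l) tau_ge0; rewrite -/A -/E => W_le.
  have : W (th l) * (1 - cos (k%:R * th l)) <= E * (1 - cos (k%:R * th l)).
    exact: ler_wpM2r.
  nra.
pose l1 : 'I_n := Ordinal n_gt1.
have term1_le : W (th l1) * (1 - cos (k%:R * th l1)) <= 2 * E - cos (th 1) * (1 - cos (th k)) / 2.
  have /andP[D_ge0 D_le2] := D_bounds l1.
  have := hess_kernel_le_cos eps_gt0 d_gt0 (d_le l1) tau_ge0 tau_lt; rewrite -/A => W_le.
  rewrite natmul_theta ?muln1 in D_ge0 D_le2 *; last exact: ltnW.
  have : W (th 1) * (1 - cos (th k)) <= (A / eps - cos (th 1) / 2) * (1 - cos (th k)).
    by rewrite ler_wpM2r.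
  have : 0 <= A / eps by rewrite divr_ge0 ?ltW.
  rewrite /E; nra.
have sum_le : \sum_(l < n) (W (th l) * (1 - cos (k%:R * th l)) - 2 * E)
    <= W (th l1) * (1 - cos (k%:R * th l1)) - 2 * E.
  rewrite (bigD1 l1) //= -[leRHS]addr0 lerD2l; apply: sumr_le0 => l _.
  by rewrite subr_le0 term_le.
rewrite /hess_eigenvalue; move: sum_le; rewrite sumrB sumr_const card_ord.
lra.
Qed.

Lemma hess_eigenvalue_lt0 k : eps <= 1 ->
  eps * (64 * n%:R) <= cos (th 1) * (1 - cos (th k)) * d ^+ 2 -> 0 < 1 - cos (th k) ->
  hess_eigenvalue n eps tau k < 0.
Proof.
move=> eps_le1 eps_small D_gt0.
have c1_gt0 : 0 < cos (th 1) := le_lt_trans tau_ge0 tau_lt.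
have A_le : A <= 4 * eps ^+ 2 / d ^+ 2.
  have := expRN_le_inv_sq (divr_gt0 d_gt0 eps_gt0); rewrite -/A.
  by rewrite expr_div_n invf_div mulrA.
have E_le : E * d ^+ 2 <= 8 * eps.
  have d2_gt0 : 0 < d ^+ 2 by rewrite exprn_gt0.
  move: A_le; rewrite ler_pdivlMr // => A_le.
  have eps2_le : eps ^+ 2 <= eps by rewrite expr2 ler_piMr // ltW.
  have : A / eps * d ^+ 2 <= 4 * eps.
    by rewrite mulrAC ler_pdivrMr //; rewrite expr2 in A_le; nra.
  by rewrite /E mulrDl; lra.
apply: (le_lt_trans (hess_eigenvalue_le k)); rewrite -mulr_natl.
have nE_le : n%:R * (E * d ^+ 2) <= n%:R * (8 * eps) by rewrite ler_wpM2l.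
set c1D := cos (th 1) * _ in eps_small *; have c1D_gt0 : 0 < c1D by rewrite mulr_gt0.
have : (n%:R * (2 * E) - c1D / 2) * d ^+ 2 < 0.
  have -> : (n%:R * (2 * E) - c1D / 2) * d ^+ 2 =
      2 * (n%:R * (E * d ^+ 2)) - c1D * d ^+ 2 / 2 by ring.
  have : 0 < c1D * d ^+ 2 by rewrite mulr_gt0 ?exprn_gt0.
  lra.
by rewrite pmulr_llt0 ?exprn_gt0.
Qed.

End SpectralGap.

Lemma finite_lower_bound_gt0 (R : realType) (I : finType) (P : pred I) (f : I -> R) :
  (forall i, P i -> 0 < f i) -> exists2 m : R, 0 < m & forall i, P i -> m <= f i.
Proof.
move=> f_gt0; exists (\big[Num.min/1]_(i | P i) f i).
  by elim/big_ind: _ => // x y x_gt0 y_gt0; rewrite lt_min x_gt0 y_gt0.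
by move=> i Pi; rewrite (bigD1 i) //= ge_min lexx.
Qed.

Lemma cos_2pi5_le_cos_theta1 (R : realType) (n : nat) : (5 <= n)%N ->
  cos (2 * pi / 5) <= cos (theta R n 1).
Proof.
move=> n_ge5; have n_ge5' : (5 : R) <= n%:R by rewrite ler_nat.
have pi_gt0 := pi_gt0 R.
have th1_ge0 : 0 <= theta R n 1 by rewrite /theta mulr1n mulr1 divr_ge0 ?mulr_ge0 ?ler0n ?ltW.
have th1_le : theta R n 1 <= 2 * pi / 5.
  rewrite /theta mulr1n mulr1; apply: ler_wpM2l; first by rewrite mulr_ge0 // ltW.
  by rewrite lef_pV2 ?posrE // (lt_le_trans _ n_ge5').
have le_pi : 2 * pi / 5 <= pi :> R by rewrite ler_pdivrMr //; nra.
rewrite leNgt ltr_cos ?in_itv /= ?th1_ge0 ?(le_trans th1_le le_pi) -?leNgt //.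
by rewrite le_pi divr_ge0 // mulr_ge0 // ltW.
Qed.

Lemma ngon_hess_eigenvalue_lt0 (R : realType) (n : nat) (tau : R) :
  (5 <= n)%N -> 0 <= tau -> tau < cos (2 * pi / 5) ->
  (forall i : 'I_n, tau != cos (theta R n i)) ->
  exists2 eps0 : R, 0 < eps0 & forall eps : R, 0 < eps -> eps <= eps0 ->
    forall k : 'I_n, (k : nat) != 0%N -> hess_eigenvalue n eps tau k < 0.
Proof.
move=> n_ge5 tau_ge0 tau_lt tau_neq.
have n_gt0 : (0 < n)%N by apply: leq_trans n_ge5.
have n_gt1 : (1 < n)%N by apply: leq_trans n_ge5.
have [d d_gt0 d_le] := @finite_lower_bound_gt0 R 'I_n predT
  (fun i => `|cos (theta R n i) - tau|)
  (fun i _ => ltac:(by rewrite normr_gt0 subr_eq0 eq_sym; exact: tau_neq i)).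
have [g g_gt0 g_le] := @finite_lower_bound_gt0 R 'I_n (fun m => (m : nat) != 0%N)
  (fun m => 1 - cos (theta R n m))
  (fun m m_neq0 => ltac:(by rewrite subr_gt0 cos_theta_lt1 // lt0n m_neq0 ltn_ord)).
have tau_lt1 : tau < cos (theta R n 1).
  exact: lt_le_trans tau_lt (cos_2pi5_le_cos_theta1 R n_ge5).
have c1_gt0 : 0 < cos (theta R n 1) := le_lt_trans tau_ge0 tau_lt1.
exists (Num.min 1 (cos (theta R n 1) * g * d ^+ 2 / (64 * n%:R))).
  by rewrite lt_min ltr01 !(divr_gt0, mulr_gt0) ?exprn_gt0 ?ltr0n.
move=> eps eps_gt0; rewrite le_min => /andP[eps_le1 eps_small] k k_neq0.
apply: (hess_eigenvalue_lt0 n_gt1 eps_gt0 d_gt0 tau_ge0 (fun l => d_le l isT) tau_lt1 eps_le1).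
  rewrite -ler_pdivlMr ?mulr_gt0 ?ltr0n //; apply: le_trans eps_small _.
  rewrite !ler_pM2r ?invr_gt0 ?mulr_gt0 ?ltr0n ?exprn_gt0 // ler_pM2l //.
  exact: g_le.
exact: lt_le_trans g_gt0 (g_le k k_neq0).
Qed.

Theorem mainTheorem12 (R : realType) (n : nat) (tau : R) :
  (5 <= n)%N ->
  0 <= tau -> tau < cos (2 * pi / 5) ->
  (forall i : 'I_n, tau != cos (2 * pi * i%:R / n%:R)) ->
  exists2 eps0 : R, 0 < eps0 &
    forall eps : R, 0 < eps -> eps <= eps0 ->
      rgrad (fobj eps tau) (ngon R n) = 0 /\
      exists (B : 'I_n -> 'M[R]_(2, n)) (lam : 'I_n -> R),
        [/\ (forall k, tangent (ngon R n) (B k)),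
            (forall k l, frob (B k) (B l) = (k == l)%:R),
            (forall k, rhess (fobj eps tau) (ngon R n) (B k) = lam k *: B k)
          & exists k0, lam k0 = 0 /\ (forall k, k != k0 -> lam k < 0)].
Proof.
move=> n_ge5 tau_ge0 tau_lt tau_neq.
have n_gt0 : (0 < n)%N by apply: leq_trans n_ge5.
have [eps0 eps0_gt0 lam_lt0] := ngon_hess_eigenvalue_lt0 n_ge5 tau_ge0 tau_lt tau_neq.
exists eps0 => // eps eps_gt0 eps_le.
split; first exact: rgrad_fobj_ngon0.
exists (hartley R n \o val), (hess_eigenvalue n eps tau \o val); split.
- by move=> k; exact: tangent_hartley.
- exact: frob_hartley.
- by move=> k; exact: rhess_hartley.
exists (Ordinal n_gt0); split.
  by rewrite /= /hess_eigenvalue big1 // => l _; rewrite mul0r cos0 subrr mulr0.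
by move=> k k_neq0; apply: lam_lt0.
Qed.
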